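(* If $M$ is an arbitrarily divisible group, then the only recognizable subsets of $M$ are $\emptyset$ and $M$, i.e. $\mathrm{Rec}(M) = \{\emptyset, M\}$.
   Context: A monoid $M$ is arbitrarily divisible if for every $m \in M$ and every positive integer $k$ there exists $m_k \in M$ with $(m_k)^k = m$. A subset $S$ of a monoid $M$ is recognizable if there exist a finite monoid $N$, a monoid morphism $\varphi\colon M \to N$ and a subset $T \subseteq N$ with $S = \varphi^{-1}(T)$. $\mathrm{Rec}(M)$ denotes the set of recognizable subsets of $M$. *)

From mathcomp Require Import all_boot.
Set Implicit Arguments.
Unset Strict Implicit.
Unset Printing Implicit Defensive.

Record monoid_on (T : Type) := MonoidOn {
  mop : T -> T -> T;
  mone : T;
  massoc : forall x y z, mop x (mop y z) = mop (mop x y) z;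
  mone_l : forall x, mop mone x = x;
  mone_r : forall x, mop x mone = x
}.

Definition is_group (T : Type) (M : monoid_on T) : Prop :=
  forall x, exists y, mop M x y = mone M /\ mop M y x = mone M.

Fixpoint mpow (T : Type) (M : monoid_on T) (x : T) (k : nat) : T :=
  match k with
  | 0 => mone M
  | k'.+1 => mop M x (mpow M x k')
  end.

Definition arbitrarily_divisible (T : Type) (M : monoid_on T) : Prop :=
  forall (m : T) (k : nat), 0 < k -> exists mk : T, mpow M mk k = m.

Definition monoid_morphism (T U : Type) (M : monoid_on T) (N : monoid_on U)
  (phi : T -> U) : Prop :=
  (forall x y, phi (mop M x y) = mop N (phi x) (phi y)) /\ phi (mone M) = mone N.

Definition recognizable (T : Type) (M : monoid_on T) (S : T -> Prop) : Prop :=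
  exists (N : finType) (MN : monoid_on N) (phi : T -> N) (P : N -> Prop),
    monoid_morphism M MN phi /\ (forall x, S x <-> P (phi x)).

From Pilot Require Import Defs.
From mathcomp Require Import all_boot.
From Stdlib Require Import Classical.

Set Implicit Arguments.
Unset Strict Implicit.

(* Every invertible element a of a finite monoid N satisfies a^(#|N|!) = 1:
   two of the powers a^0, ..., a^#|N| coincide, cancelling a^i yields a^d = 1
   for some 0 < d <= #|N|, and d divides #|N|!.  A morphism phi from an
   arbitrarily divisible group into N is therefore trivial, since every x is
   of the form y^(#|N|!) and phi y is invertible.  A set recognized through
   phi is then either empty or everything, according to whether it contains
   the identity. *)

Section MonoidPowers.
Variables (U : Type) (N : monoid_on U).

Lemma mpowD (a : U) m n : mpow N a (m + n) = mop N (mpow N a m) (mpow N a n).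
Proof.
elim: m => [|m IH] /=; first by rewrite mone_l.
by rewrite IH massoc.
Qed.

Lemma mpowSr (a : U) n : mpow N a n.+1 = mop N (mpow N a n) a.
Proof. by rewrite -addn1 mpowD /= mone_r. Qed.

Lemma mpow1n n : mpow N (mone N) n = mone N.
Proof. by elim: n => //= n ->; rewrite mone_l. Qed.

Lemma mpowM (a : U) m n : mpow N a (m * n) = mpow N (mpow N a m) n.
Proof.
elim: n => [|n IH]; first by rewrite muln0.
by rewrite mulnS mpowD IH.
Qed.

Lemma mpow_rinv (a b : U) n : mop N a b = mone N ->
  mop N (mpow N a n) (mpow N b n) = mone N.
Proof.
move=> ab; elim: n => [|n IH]; first by rewrite /= mone_l.
by rewrite (mpowSr b) /= massoc -(massoc N a) IH mone_r.
Qed.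

Lemma mpow_cancel (a b : U) i d : mop N b a = mone N ->
  mpow N a (i + d) = mpow N a i -> mpow N a d = mone N.
Proof.
move=> ba; rewrite mpowD => eq_pow.
have inv_i := mpow_rinv i ba.
by rewrite -[mpow N a d](mone_l N) -inv_i -massoc eq_pow inv_i.
Qed.

Lemma mpow_dvd_one (a : U) d n :
  mpow N a d = mone N -> d %| n -> mpow N a n = mone N.
Proof. by move=> ad1 /dvdnP[q ->]; rewrite mulnC mpowM ad1 mpow1n. Qed.

End MonoidPowers.

Lemma mpow_collision (N : finType) (MN : monoid_on N) (a : N) :
  exists i j, [/\ i < j, j <= #|N| & mpow MN a i = mpow MN a j].
Proof.
pose f (i : 'I_#|N|.+1) := mpow MN a i.
have /injectivePn[i [j neq_ij eq_f]] : ~~ injectiveb f.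
  by apply/injectiveP => /leq_card; rewrite card_ord ltnn.
have le_ord (k : 'I_#|N|.+1) : k <= #|N| by rewrite -ltnS.
case: (ltngtP i j) => [lt_ij | lt_ji | /val_inj eq_ij].
- by exists i, j.
- by exists j, i.
- by rewrite eq_ij eqxx in neq_ij.
Qed.

Lemma mpow_card_fact (N : finType) (MN : monoid_on N) (a b : N) :
  mop MN b a = mone MN -> mpow MN a #|N|`! = mone MN.
Proof.
move=> ba; have [i [j [lt_ij le_jN eq_pow]]] := mpow_collision MN a.
apply: (@mpow_dvd_one _ _ _ (j - i)).
  by apply: (mpow_cancel (i := i) ba); rewrite subnKC 1?ltnW.
by rewrite dvdn_fact // subn_gt0 lt_ij (leq_trans (leq_subr _ _)).
Qed.

Lemma morph_mpow (T U : Type) (M : monoid_on T) (N : monoid_on U) (phi : T -> U) :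
  Defs.monoid_morphism M N phi ->
  forall x k, phi (mpow M x k) = mpow N (phi x) k.
Proof. by case=> phiM phi1 x; elim=> [|k IH] //=; rewrite phiM IH. Qed.

Lemma divisible_group_morphism_trivial (T : Type) (M : monoid_on T)
    (N : finType) (MN : monoid_on N) (phi : T -> N) :
  is_group M -> arbitrarily_divisible M -> Defs.monoid_morphism M MN phi ->
  forall x, phi x = mone MN.
Proof.
move=> grp div phi_morph x.
have [y <-] := div x #|N|`! (fact_gt0 _).
have [z [_ zy]] := grp y.
rewrite (morph_mpow phi_morph); apply: (@mpow_card_fact _ _ _ (phi z)).
by case: phi_morph => phiM phi1; rewrite -phiM zy phi1.
Qed.

Theorem proposition3 (T : Type) (M : monoid_on T) :
  is_group M -> arbitrarily_divisible M ->
  forall S : T -> Prop, recognizable M S ->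
    (forall x, ~ S x) \/ (forall x, S x).
Proof.
move=> grp div S [N [MN [phi [P [phi_morph recS]]]]].
have phi_one := divisible_group_morphism_trivial grp div phi_morph.
have [P1 | notP1] := classic (P (mone MN)).
- by right=> x; apply/recS; rewrite phi_one.
- by left=> x /recS; rewrite phi_one.
Qed.
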